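(* Fix indices $\alpha\neq\beta$, $\gamma$, and an integer $l\in\mathbb{Z}$. For the formal operator $X_l=\sum_{x<y+l}q_\alpha(x)q_\beta(y)$ one has, as formal sums, $$ i\,[X_l,Q_\gamma]=\sum_{x\in\mathbb{Z}}\Big[J_{\alpha,\gamma}(x+l)\,q_\beta(x)-q_\alpha(x+l)\,J_{\beta,\gamma}(x+1)\Big].$$ Moreover, on a periodic chain, for any normalized $|\Psi\rangle$ that is a simultaneous eigenvector of the translation operator and of $Q_\gamma$, the expectation value $\langle\Psi|J_{\alpha,\gamma}(x+l)\,q_\beta(x)-q_\alpha(x+l)\,J_{\beta,\gamma}(x+1)|\Psi\rangle$ does not depend on $l$ (nor on $x$).
   Context: Spin chain with sites $x\in\mathbb{Z}$ (infinite chain for the commutator identity; periodic chain of length $L$, sites mod $L$, for the expectation value statement) and local space $\mathbb{C}^N$; $U$ denotes the unitary one-site translation and a local operator family is translation covariant if $\mathcal{O}(x+1)=U\mathcal{O}(x)U^{-1}$. There is a family of mutually commuting, translation invariant conserved charges $Q_\alpha=\sum_x q_\alpha(x)$ with translation covariant local densities $q_\alpha(x)$. The generalized currents $J_{\alpha,\beta}(x)$ are translation covariant local operators defined by $$ i\,[Q_\beta,q_\alpha(x)]=J_{\alpha,\beta}(x)-J_{\alpha,\beta}(x+1)\quad\text{for all }x,$$ so that on the infinite chain $i[Q_\beta,\sum_{y>x}q_\alpha(y)]=J_{\alpha,\beta}(x+1)$ and $i[Q_\beta,\sum_{y<x}q_\alpha(y)]=-J_{\alpha,\beta}(x)$. Commutators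 of formal sums are computed term by term. *)

From HB Require Import structures.
From mathcomp Require Import all_boot all_order all_algebra all_field.
Set Implicit Arguments. Unset Strict Implicit. Unset Printing Implicit Defensive.
Import GRing.Theory Num.Theory.
Local Open Scope ring_scope.

(* [fsum_eq tau a b] : the formal sums  \sum_{x in Z} tau^x(a)  and
   \sum_{x in Z} tau^x(b)  are equal as formal sums, i.e. their densities
   differ by a total difference  c - tau c  (so the two sums agree after
   term-by-term reindexing x -> x+1 and telescoping, boundary terms at
   infinity being dropped, as in the paper's formal calculus). *)
Definition fsum_eq (B : pzRingType) (tau : B -> B) (a b : B) : Prop :=
  exists c : B, a - b = c - tau c.

Definition adjmx (m n : nat) (A : 'M[algC]_(m, n)) : 'M[algC]_(n, m) :=
  (map_mx Num.conj A)^T.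

Definition expval (n : nat) (Psi : 'cV[algC]_n) (A : 'M[algC]_n) : algC :=
  (adjmx Psi *m A *m Psi) 0 0.

Definition charge (n L : nat) (q : int -> 'M[algC]_n) : 'M[algC]_n :=
  \sum_(0 <= x < L) q (x%:Z).

(* The identity for [i[X_l, Q_gamma]] is the Leibniz rule for the derivation
   [i[., Q_gamma]] applied to the density [L_alpha(l) q_beta(0)] of [X_l], where
   [L_alpha(l) = sum_{y<l} q_alpha(y)]; the leftover terms telescope under
   translation.  On the periodic chain, an eigenvector of the unitary
   translation has translation-invariant expectation values, and an eigenvector
   of the Hermitian charge [Q_gamma] annihilates the expectation of every
   commutator with [Q_gamma].  The first fact removes the dependence on [x]; the
   second, applied to [i[Q_gamma, q_alpha(l) q_beta(0)]], shows that shifting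
   [l] by one changes the expectation by zero. *)

From HB Require Import structures.
From mathcomp Require Import all_boot all_order all_algebra all_field.
From mathcomp Require Import ring.
Import GRing.Theory Num.Theory.
Local Open Scope ring_scope.

Lemma int_shift_invariant_const {T : Type} {g : int -> T} :
  (forall z, g (z + 1) = g z) -> forall z, g z = g 0.
Proof.
move=> gS; elim/int_rect => [//|n IHn|n IHn].
  by rewrite -IHn -[in RHS]gS -addn1 PoszD.
by rewrite -IHn -[in RHS](subrK 1 (- n%:Z)) gS -addn1 PoszD opprD.
Qed.

Section InfiniteChain.

Context {I : Type} {B : pzRingType} {tau : {rmorphism B -> B}}.
Context {D : I -> B -> B} {q Lq : I -> int -> B} {J : I -> I -> int -> B}.

Hypothesis D_Leibniz : forall b u v, D b (u * v) = D b u * v + u * D b v.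
Hypothesis J_shift : forall a b x, J a b (x + 1) = tau (J a b x).
Hypothesis D_density : forall a b x, D b (q a x) = J a b x - J a b (x + 1).
Hypothesis Lq_step : forall a x, Lq a (x + 1) = Lq a x + q a x.
Hypothesis Lq_shift : forall a x, Lq a (x + 1) = tau (Lq a x).
Hypothesis D_left_sum : forall a b x, D b (Lq a x) = - J a b x.

(* The telescoped term is [c = - L_alpha(l) J_beta(0)]: since
   [L_alpha(l+1) = L_alpha(l) + q_alpha(l)], the two halves of
   [- L_alpha(l) D q_beta(0)] combine with [- q_alpha(l) J_beta(1)] into [c - tau c]. *)
Lemma fsum_eq_commutator_density (alpha beta gamma : I) (l : int) :
  fsum_eq tau (- D gamma (Lq alpha l * q beta 0))
              (J alpha gamma l * q beta 0 - q alpha l * J beta gamma 1).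
Proof.
exists (- (Lq alpha l * J beta gamma 0)).
rewrite rmorphN rmorphM -Lq_shift -J_shift add0r Lq_step.
rewrite D_Leibniz D_left_sum D_density add0r mulrBr mulrDl mulNr.
by rewrite opprK opprD opprK opprB opprB addrC subrKA addrC addrAC addrC.
Qed.

End InfiniteChain.

Lemma adjmxM (m n p : nat) (A : 'M[algC]_(m, n)) (B : 'M[algC]_(n, p)) :
  adjmx (A *m B) = adjmx B *m adjmx A.
Proof. by rewrite /adjmx map_mxM trmx_mul. Qed.

Lemma adjmxZ (m n : nat) (c : algC) (A : 'M[algC]_(m, n)) :
  adjmx (c *: A) = c^* *: adjmx A.
Proof. by rewrite /adjmx map_mxZ linearZ. Qed.

Lemma adjmxK (m n : nat) (A : 'M[algC]_(m, n)) : adjmx (adjmx A) = A.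
Proof. by apply/matrixP=> i j; rewrite !mxE conjCK. Qed.

Lemma unitary_invmx (n : nat) (U : 'M[algC]_n) :
  U *m adjmx U = 1%:M -> invmx U = adjmx U.
Proof.
move=> UU'; have [Uu _] := mulmx1_unit UU'.
by rewrite -[invmx U]mulmx1 -UU' mulmxA mulVmx // mul1mx.
Qed.

Lemma conjmxM (n : nat) (U A B : 'M[algC]_n) : U \in unitmx ->
  (U *m A *m invmx U) *m (U *m B *m invmx U) = U *m (A *m B) *m invmx U.
Proof. by move=> Uu; rewrite !mulmxA -(mulmxA _ (invmx U) U) mulVmx // mulmx1. Qed.

Lemma commmx_mulr (n : nat) (Q A B : 'M[algC]_n) :
  Q *m (A *m B) - (A *m B) *m Q = (Q *m A - A *m Q) *m B + A *m (Q *m B - B *m Q).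
Proof. by rewrite mulmxBl mulmxBr !mulmxA addrA addrNK. Qed.

Section Expectation.

Context {n : nat} {Psi : 'cV[algC]_n}.
Hypothesis Psi_normed : adjmx Psi *m Psi = 1%:M.

Lemma expvalD (A B : 'M[algC]_n) : expval Psi (A + B) = expval Psi A + expval Psi B.
Proof. by rewrite /expval mulmxDr mulmxDl mxE. Qed.

Lemma expvalB (A B : 'M[algC]_n) : expval Psi (A - B) = expval Psi A - expval Psi B.
Proof. by rewrite /expval mulmxBr mulmxBl !mxE. Qed.

Lemma expvalZ (c : algC) (A : 'M[algC]_n) : expval Psi (c *: A) = c * expval Psi A.
Proof. by rewrite /expval -scalemxAr -scalemxAl mxE. Qed.

Lemma expval1 : expval Psi 1%:M = 1.
Proof. by rewrite /expval mulmx1 Psi_normed !mxE. Qed.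

Lemma expval_eigen {A : 'M[algC]_n} {c : algC} :
  A *m Psi = c *: Psi -> expval Psi A = c.
Proof. by move=> APsi; rewrite /expval -mulmxA APsi -scalemxAr Psi_normed !mxE mulr1. Qed.

Lemma eigenvalue_unitary_norm {U : 'M[algC]_n} {mu : algC} :
  adjmx U *m U = 1%:M -> U *m Psi = mu *: Psi -> mu^* * mu = 1.
Proof.
move=> U'U UPsi; rewrite -expval1 -U'U /expval !mulmxA -adjmxM -mulmxA UPsi adjmxZ.
by rewrite -scalemxAr -scalemxAl scalerA Psi_normed !mxE mulr1 mulrC.
Qed.

Lemma expval_unitary_conj (U : 'M[algC]_n) (mu : algC) (A : 'M[algC]_n) :
  adjmx U *m U = 1%:M -> U *m adjmx U = 1%:M -> U *m Psi = mu *: Psi ->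
  expval Psi (U *m A *m invmx U) = expval Psi A.
Proof.
move=> U'U UU' UPsi; rewrite unitary_invmx //.
have PsiE : Psi = mu *: (adjmx U *m Psi) by rewrite scalemxAr -UPsi mulmxA U'U mul1mx.
rewrite [in RHS]/expval [in RHS]PsiE adjmxZ adjmxM adjmxK -scalemxAr -!scalemxAl.
by rewrite scalerA mulrC (eigenvalue_unitary_norm U'U UPsi) scale1r /expval !mulmxA.
Qed.

Lemma expval_commutator_eigen (Q A : 'M[algC]_n) (lambda : algC) :
  adjmx Q = Q -> Q *m Psi = lambda *: Psi -> expval Psi (Q *m A - A *m Q) = 0.
Proof.
move=> QQ QPsi.
have PsiQ : adjmx Psi *m Q = lambda^* *: adjmx Psi by rewrite -{1}QQ -adjmxM QPsi adjmxZ.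
have lambda_real : lambda^* = lambda.
  by rewrite -[RHS](expval_eigen QPsi) /expval PsiQ -scalemxAl Psi_normed !mxE mulr1.
rewrite /expval mulmxBr mulmxBl !mulmxA PsiQ -!mulmxA QPsi -scalemxAl -!scalemxAr.
by rewrite lambda_real subrr mxE.
Qed.

End Expectation.

Definition mixed_density {I : Type} {n : nat} (q : I -> int -> 'M[algC]_n)
    (J : I -> I -> int -> 'M[algC]_n) (alpha beta gamma : I) (l x : int) : 'M[algC]_n :=
  J alpha gamma (x + l) *m q beta x - q alpha (x + l) *m J beta gamma (x + 1).

Section PeriodicChain.

Context {I : Type} {n L : nat} {U : 'M[algC]_n}.
Context {q : I -> int -> 'M[algC]_n} {J : I -> I -> int -> 'M[algC]_n}.
Context {Psi : 'cV[algC]_n} {mu lambda : algC} {alpha beta gamma : I}.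

Hypotheses (U'U : adjmx U *m U = 1%:M) (UU' : U *m adjmx U = 1%:M).
Hypothesis q_shift : forall a x, q a (x + 1) = U *m q a x *m invmx U.
Hypothesis J_shift : forall a b x, J a b (x + 1) = U *m J a b x *m invmx U.
Hypothesis charge_commutator : forall a b x,
  'i *: (charge L (q b) *m q a x - q a x *m charge L (q b)) = J a b x - J a b (x + 1).
Hypothesis charge_hermitian : adjmx (charge L (q gamma)) = charge L (q gamma).
Hypothesis Psi_normed : adjmx Psi *m Psi = 1%:M.
Hypothesis U_Psi : U *m Psi = mu *: Psi.
Hypothesis charge_Psi : charge L (q gamma) *m Psi = lambda *: Psi.

Local Notation density := (mixed_density q J alpha beta gamma).

Let U_unit : U \in unitmx.
Proof. by have [] := mulmx1_unit UU'. Qed.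

Let expval_shift (A : 'M[algC]_n) : expval Psi (U *m A *m invmx U) = expval Psi A.
Proof. exact: expval_unitary_conj Psi_normed _ _ _ U'U UU' U_Psi. Qed.

Lemma expval_mixed_density_shiftx (l x : int) :
  expval Psi (density l (x + 1)) = expval Psi (density l x).
Proof.
rewrite /mixed_density (addrAC x 1 l) (q_shift beta x) (q_shift alpha (x + l)).
rewrite (J_shift alpha gamma (x + l)) (J_shift beta gamma (x + 1)) !conjmxM //.
by rewrite -mulmxBl -mulmxBr expval_shift.
Qed.

Lemma expval_mixed_density_shiftl (l : int) :
  expval Psi (density (l + 1) 0) = expval Psi (density l 0).
Proof.
have Leibniz0 : expval Psi ((J alpha gamma l - J alpha gamma (l + 1)) *m q beta 0
                  + q alpha l *m (J beta gamma 0 - J beta gamma (0 + 1))) = 0.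
  rewrite -!charge_commutator -scalemxAl -scalemxAr -scalerDr -commmx_mulr expvalZ.
  by rewrite (expval_commutator_eigen Psi_normed _ _ _ charge_hermitian charge_Psi) mulr0.
have qJ_shift : expval Psi (q alpha (l + 1) *m J beta gamma 1)
                = expval Psi (q alpha l *m J beta gamma 0).
  by rewrite q_shift -[1]add0r J_shift conjmxM // expval_shift.
move: Leibniz0; rewrite /mixed_density !add0r !(mulmxBl, mulmxBr) expvalD !expvalB qJ_shift.
by move=> Leibniz0; apply: subr0_eq; rewrite -oppr0 -Leibniz0; ring.
Qed.

Lemma expval_mixed_density_const (l x : int) :
  expval Psi (density l x) = expval Psi (density 0 0).
Proof.
rewrite (int_shift_invariant_const (expval_mixed_density_shiftx l)).
exact: (int_shift_invariant_const expval_mixed_density_shiftl).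
Qed.

End PeriodicChain.

Theorem mainTheorem3 (I : Type) (alpha beta gamma : I) (hab : alpha <> beta) :
  (forall (l : int)
     (B : pzRingType)
     (tau : {rmorphism B -> B})
     (D : I -> B -> B)
     (q : I -> int -> B)
     (J : I -> I -> int -> B)
     (Lq : I -> int -> B),
     (forall b u v, D b (u + v) = D b u + D b v) ->
     (forall b u v, D b (u * v) = D b u * v + u * D b v) ->
     (forall b u, D b (tau u) = tau (D b u)) ->
     (forall a x, q a (x + 1) = tau (q a x)) ->
     (forall a b x, J a b (x + 1) = tau (J a b x)) ->
     (forall a b x, D b (q a x) = J a b x - J a b (x + 1)) ->
     (forall a x, Lq a (x + 1) = Lq a x + q a x) ->
     (forall a x, Lq a (x + 1) = tau (Lq a x)) ->
     (forall a b x, D b (Lq a x) = - J a b x) ->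
     fsum_eq tau (- D gamma (Lq alpha l * q beta 0))
                 (J alpha gamma (0 + l) * q beta 0 - q alpha (0 + l) * J beta gamma (0 + 1)))
  /\
  (forall (n L : nat) (hL : (0 < L)%N)
     (U : 'M[algC]_n)
     (q : I -> int -> 'M[algC]_n)
     (J : I -> I -> int -> 'M[algC]_n)
     (Psi : 'cV[algC]_n) (mu lambda : algC),
     adjmx U *m U = 1%:M ->
     U *m adjmx U = 1%:M ->
     (forall a x, q a (x + L%:Z) = q a x) ->
     (forall a b x, J a b (x + L%:Z) = J a b x) ->
     (forall a x, q a (x + 1) = U *m q a x *m invmx U) ->
     (forall a b x, J a b (x + 1) = U *m J a b x *m invmx U) ->
     (forall a b x, 'i *: (charge L (q b) *m q a x - q a x *m charge L (q b))
                    = J a b x - J a b (x + 1)) ->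
     adjmx (charge L (q gamma)) = charge L (q gamma) ->
     adjmx Psi *m Psi = 1%:M ->
     U *m Psi = mu *: Psi ->
     charge L (q gamma) *m Psi = lambda *: Psi ->
     forall (l1 l2 x1 x2 : int),
       expval Psi (J alpha gamma (x1 + l1) *m q beta x1
                   - q alpha (x1 + l1) *m J beta gamma (x1 + 1))
       = expval Psi (J alpha gamma (x2 + l2) *m q beta x2
                     - q alpha (x2 + l2) *m J beta gamma (x2 + 1))).
Proof.
split=> [l B tau D q J Lq _ D_Leibniz _ _ J_shift D_density Lq_step Lq_shift D_left_sum |].
  rewrite !add0r.
  exact: (fsum_eq_commutator_density D_Leibniz J_shift D_density Lq_step Lq_shift D_left_sum).
move=> n L _ U q J Psi mu lambda U'U UU' _ _ q_shift J_shift charge_commutator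
  charge_hermitian Psi_normed U_Psi charge_Psi l1 l2 x1 x2.
have density_const := expval_mixed_density_const (alpha := alpha) (beta := beta)
  U'U UU' q_shift J_shift charge_commutator charge_hermitian Psi_normed U_Psi charge_Psi.
exact: etrans (density_const l1 x1) (esym (density_const l2 x2)).
Qed.
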